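(* Let $X=(X_k)$ be a sequence of fuzzy numbers, $\beta\in(0,1]$, $p>0$, $m\ge0$ an integer and $\theta$ a lacunary sequence. Then: (i) If $X\in N_\theta^\beta(p,F,\Delta^m)$, then $X\in S_\theta^\beta(F,\Delta^m)$ and the limits are the same. (ii) If $X\in N_\theta^\beta(p,F,\Delta^m)$, then $X\in S_\theta(F,\Delta^m)$ and the limits are the same.
   Context: A fuzzy number is a map $X:\mathbb{R}\to[0,1]$ which is normal, fuzzy convex, upper semicontinuous, with compact closure of $\{t:X(t)>0\}$; $L(\mathbb{R})$ is the set of fuzzy numbers. Level sets $[X]^\alpha=\{t:X(t)\ge\alpha\}$ ($\alpha\in(0,1]$), $[X]^0=\overline{\{t:X(t)>0\}}$, are compact intervals $[u^\alpha,v^\alpha]$. Subtraction: $[X-Y]^\alpha=[u_1^\alpha-v_2^\alpha,v_1^\alpha-u_2^\alpha]$. Metric: $d(X,Y)=\sup_{\alpha\in[0,1]}\max\{|u_1^\alpha-u_2^\alpha|,|v_1^\alpha-v_2^\alpha|\}$. $(\Delta^0X)_k=X_k$, $(\Delta^1X)_k=X_k-X_{k+1}$, $(\Delta^mX)_k=(\Delta^1(\Delta^{m-1}X))_k$. A lacunary sequence is an increasing integer sequence $\theta=(k_r)_{r\ge0}$ with $k_0=0$, $h_r=k_r-k_{r-1}\to\infty$; $I_r=(k_{r-1},k_r]$. $S_\theta^\beta(F,\Delta^m)$: sequences $X$ with some $X_0\in L(\mathbb{R})$ (the limit) such that for all $\varepsilon>0$, $\lim_r\frac{1}{h_r^\beta}|\{k\in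 I_r:d(\Delta^mX_k,X_0)\ge\varepsilon\}|=0$; $S_\theta(F,\Delta^m)$ is the case $\beta=1$. $N_\theta^\beta(p,F,\Delta^m)$: sequences $X$ with some $X_0\in L(\mathbb{R})$ (the limit) such that $\lim_r\frac{1}{h_r^\beta}\sum_{k\in I_r}d(\Delta^mX_k,X_0)^p=0$. *)

From HB Require Import structures.
From mathcomp Require Import all_boot all_order all_algebra.
From mathcomp Require Import all_classical all_reals all_analysis.
Set Implicit Arguments. Unset Strict Implicit. Unset Printing Implicit Defensive.
Import Order.TTheory GRing.Theory Num.Theory.
Import numFieldNormedType.Exports.
Local Open Scope classical_set_scope.
Local Open Scope ring_scope.

Section Fuzzy.
Variable R : realType.

Definition usc (X : R -> R) : Prop :=
  forall t (e : R), 0 < e -> exists2 d : R, 0 < d &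
    forall s, `|s - t| < d -> X s < X t + e.

Definition fuzzy_number (X : R -> R) : Prop :=
  [/\ (forall t, 0 <= X t <= 1),
      (exists t, X t = 1),
      (forall s t l, 0 <= l <= 1 -> Num.min (X s) (X t) <= X (l * s + (1 - l) * t)),
      usc X &
      compact (closure [set t | 0 < X t])].

Definition level (X : R -> R) (a : R) : set R :=
  if a == 0 then closure [set t | 0 < X t] else [set t | a <= X t].

Definition lev_lo (X : R -> R) (a : R) : R := inf (level X a).
Definition lev_hi (X : R -> R) (a : R) : R := sup (level X a).

(* subtraction: the fuzzy number Z with [Z]^a = [u1^a - v2^a, v1^a - u2^a];
   its membership function is Z t = sup {a in (0,1] | t in [Z]^a} (0 if empty) *)
Definition fsub (X Y : R -> R) : R -> R := fun t =>
  sup ([set a | 0 < a <= 1 /\ lev_lo X a - lev_hi Y a <= t <= lev_hi X a - lev_lo Y a]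
       `|` [set 0]).

Definition fdist (X Y : R -> R) : R :=
  sup [set Num.max `|lev_lo X a - lev_lo Y a| `|lev_hi X a - lev_hi Y a|
      | a in [set a : R | 0 <= a <= 1]].

Fixpoint Delta (m : nat) (X : nat -> R -> R) : nat -> R -> R :=
  match m with
  | 0 => X
  | m'.+1 => fun k => fsub (Delta m' X k) (Delta m' X k.+1)
  end.

Definition hr (theta : nat -> nat) (r : nat) : nat := (theta r - theta r.-1)%N.

Definition lacunary (theta : nat -> nat) : Prop :=
  [/\ theta 0 = 0%N,
      (forall r, (theta r < theta r.+1)%N) &
      (forall M : nat, exists N : nat, forall r, (N <= r)%N -> (M <= hr theta r)%N)].

Definition bad_count (theta : nat -> nat) (m : nat) (X : nat -> R -> R)
    (X0 : R -> R) (eps : R) (r : nat) : nat :=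
  (\sum_((theta r.-1).+1 <= k < (theta r).+1 | (eps <= fdist (Delta m X k) X0)%R) 1)%N.

Definition S_theta_lim (theta : nat -> nat) (beta : R) (m : nat)
    (X : nat -> R -> R) (X0 : R -> R) : Prop :=
  fuzzy_number X0 /\
  forall eps : R, 0 < eps ->
    (fun r => (bad_count theta m X X0 eps r)%:R / ((hr theta r)%:R `^ beta))
      @ \oo --> (0 : R).

Definition N_theta_lim (theta : nat -> nat) (beta p : R) (m : nat)
    (X : nat -> R -> R) (X0 : R -> R) : Prop :=
  fuzzy_number X0 /\
  (fun r => (\sum_((theta r.-1).+1 <= k < (theta r).+1)
               (fdist (Delta m X k) X0) `^ p) / ((hr theta r)%:R `^ beta))
    @ \oo --> (0 : R).

End Fuzzy.

(** The Markov-type inequality  #{k in I_r : d_k >= eps} * eps^p <= sum_{k in I_r} d_k^p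
   bounds the S-ratio by the N-ratio divided by eps^p, which gives (i). For (ii), h_r >= 1
   and beta <= 1 give h_r^beta <= h_r, so the S_theta ratio is dominated by the
   S_theta^beta ratio. *)
From HB Require Import structures.
From mathcomp Require Import all_boot all_order all_algebra.
From mathcomp Require Import all_classical all_reals all_analysis.
Import Order.TTheory GRing.Theory Num.Theory.
Import numFieldNormedType.Exports.
Local Open Scope classical_set_scope.
Local Open Scope ring_scope.

Lemma count_mul_powR_le_sum (R : realType) (I : Type) (s : seq I) (f : I -> R)
    (eps p : R) :
  0 < eps -> 0 <= p ->
  (\sum_(i <- s | (eps <= f i)%R) 1)%N%:R * eps `^ p <= \sum_(i <- s) f i `^ p.
Proof.
move=> eps_gt0 p_ge0; rewrite natr_sum big_distrl /=.
rewrite [leRHS](bigID (fun i => eps <= f i)) /= -[leLHS]addr0.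
apply: lerD; last by apply: sumr_ge0 => i _; apply: powR_ge0.
apply: ler_sum => i eps_le_fi; rewrite mul1r.
have fi_ge0 : 0 <= f i := le_trans (ltW eps_gt0) eps_le_fi.
by apply: ge0_ler_powR; rewrite // nnegrE // ltW.
Qed.

Lemma squeeze_cvg0 {R : realType} {u v : nat -> R} :
  (\forall n \near \oo, 0 <= u n <= v n) -> v @ \oo --> 0 -> u @ \oo --> 0.
Proof. by move=> uv; apply: (squeeze_cvgr uv) => //; apply: cvg_cst. Qed.

Lemma hr_gt0 (theta : nat -> nat) (r : nat) :
  (forall r, theta r < theta r.+1)%N -> (0 < r)%N -> (0 < hr theta r)%N.
Proof. by move=> theta_incr; case: r => // r _; rewrite subn_gt0. Qed.

Lemma N_theta_lim_S_theta_lim (R : realType) (X : nat -> R -> R) (beta p : R)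
    (m : nat) (theta : nat -> nat) (X0 : R -> R) :
  0 < p -> N_theta_lim theta beta p m X X0 -> S_theta_lim theta beta m X X0.
Proof.
move=> p_gt0 [X0_fuzzy N_cvg]; split=> // eps eps_gt0.
have epsp_gt0 : 0 < eps `^ p by apply: powR_gt0.
set N_ratio := fun r => _ in N_cvg.
have ratio_cvg : (fun r => N_ratio r / eps `^ p) @ \oo --> 0.
  by rewrite -(mul0r (eps `^ p)^-1); apply: cvgM => //; apply: cvg_cst.
apply: (squeeze_cvg0 _ ratio_cvg).
near=> r; rewrite divr_ge0 ?powR_ge0 //=.
rewrite ler_pdivlMr // mulrAC ler_wpM2r ?invr_ge0 ?powR_ge0 //.
by apply: count_mul_powR_le_sum => //; apply: ltW.
Unshelve. all: by end_near.
Qed.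

Lemma S_theta_lim_powR1 (R : realType) (X : nat -> R -> R) (beta : R) (m : nat)
    (theta : nat -> nat) (X0 : R -> R) :
  (forall r, theta r < theta r.+1)%N -> 0 < beta <= 1 ->
  S_theta_lim theta beta m X X0 -> S_theta_lim theta 1 m X X0.
Proof.
move=> theta_incr /andP[beta_gt0 beta_le1] [X0_fuzzy S_cvg]; split=> // eps eps_gt0.
apply: (squeeze_cvg0 _ (S_cvg eps eps_gt0)); exists 1%N => // r /= r_gt0.
have hr_ge1 : 1 <= (hr theta r)%:R :> R by rewrite ler1n hr_gt0.
have hr_pos : 0 < (hr theta r)%:R :> R by apply: lt_le_trans hr_ge1.
rewrite (powRr1 (ltW hr_pos)) divr_ge0 ?(ltW hr_pos) //=.
apply: ler_wpM2l; first exact: ler0n.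
by rewrite lef_pV2 ?posrE ?powR_gt0 // ler1_powR.
Qed.

Theorem corollary2p8 (R : realType) (X : nat -> R -> R) (beta p : R) (m : nat)
    (theta : nat -> nat) :
  (forall k, fuzzy_number (X k)) -> 0 < beta <= 1 -> 0 < p -> lacunary theta ->
  (forall X0, N_theta_lim theta beta p m X X0 -> S_theta_lim theta beta m X X0) /\
  (forall X0, N_theta_lim theta beta p m X X0 -> S_theta_lim theta 1 m X X0).
Proof.
move=> _ beta01 p_gt0 [_ theta_incr _]; split=> X0 N_lim.
  exact: N_theta_lim_S_theta_lim N_lim.
apply: S_theta_lim_powR1 theta_incr beta01 _.
exact: N_theta_lim_S_theta_lim N_lim.
Qed.
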